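(* Let $D$ be a distribution over single-qubit states with mean Bloch vector $\vec{\mu} = (0,0,\mu)$, Pauli second moment matrix $\mathcal{S}$ with $\|\mathcal{S}\|_{\mathrm{op}} \le 1-\eta$ for some $\eta \in (0,1)$, and Pauli covariance matrix $\Sigma$. Let $\Delta = \mathrm{diag}\big((1-\mu^2)^{-1/4},(1-\mu^2)^{-1/4},(1-\mu^2)^{-1/2}\big)$. Then there exists $\eta' \in (0,1)$, depending only on $\eta$, such that $\|\Delta\Sigma \Delta\|_{\mathrm{op}} \le 1-\eta'$.
   Context: A single-qubit state is $\rho=\frac12(I+\alpha_xX+\alpha_yY+\alpha_zZ)$ with $\|\vec\alpha\|_2\le 1$ ($X,Y,Z$ the Pauli matrices); $D$ is viewed as a distribution over $\vec\alpha$ with mean Bloch vector $\vec\mu=\mathbb{E}[\vec\alpha]$. The Pauli second moment matrix $\mathcal{S}$ and covariance matrix $\Sigma$ are the $3\times3$ real matrices indexed by $P,Q\in\{X,Y,Z\}$ with $\mathcal{S}_{P,Q}=\mathbb{E}_{\rho\sim D}[\mathrm{tr}(P\rho)\mathrm{tr}(Q\rho)]$ and $\Sigma_{P,Q}=\mathbb{E}_{\rho\sim D}[\mathrm{tr}(P\rho)\mathrm{tr}(Q\rho)]-\mathrm{tr}(P\,\mathbb{E}[\rho])\,\mathrm{tr}(Q\,\mathbb{E}[\rho])$, with rows/columns ordered $X,Y,Z$. *)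

From HB Require Import structures.
From mathcomp Require Import all_boot all_order all_algebra.
From mathcomp Require Import all_classical all_reals all_analysis.
Set Implicit Arguments. Unset Strict Implicit. Unset Printing Implicit Defensive.
Import Order.TTheory GRing.Theory Num.Theory.
Local Open Scope ring_scope.
Local Open Scope classical_set_scope.

Definition norm2 (R : realType) (n : nat) (v : 'cV[R]_n) : R :=
  Num.sqrt (\sum_(i < n) (v i 0) ^+ 2).

Definition opnorm (R : realType) (n : nat) (A : 'M[R]_n) : R :=
  sup [set norm2 (A *m v) | v in [set v : 'cV[R]_n | norm2 v <= 1]].

(* real-valued expectation (all random variables used are bounded) *)
Definition Ex d (T : measurableType d) (R : realType) (P : probability T R)
  (X : T -> R) : R := fine ('E_P[X])%E.

(* Pauli second moment matrix S_{P,Q} = E[tr(P rho) tr(Q rho)] = E[a_P a_Q],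
   indices 0,1,2 = X,Y,Z *)
Definition second_moment d (T : measurableType d) (R : realType)
  (P : probability T R) (a : 'I_3 -> T -> R) : 'M[R]_3 :=
  \matrix_(i < 3, j < 3) Ex P (fun t => a i t * a j t).

Definition covariance_mx d (T : measurableType d) (R : realType)
  (P : probability T R) (a : 'I_3 -> T -> R) : 'M[R]_3 :=
  second_moment P a - \matrix_(i < 3, j < 3) (Ex P (a i) * Ex P (a j)).

Definition Delta_mx (R : realType) (mu : R) : 'M[R]_3 :=
  diag_mx (\row_(i < 3)
    (if (i : nat) == 2%N then (Num.sqrt (1 - mu ^+ 2))^-1
     else (Num.sqrt (Num.sqrt (1 - mu ^+ 2)))^-1)).

(* Write S for the second moment, Sg = S - mu^2 e_z e_z^T for the covariance,
   sg = sqrt (1 - mu^2) and k = 1/sg, so that Delta = diag (sqrt k, sqrt k, k).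
   Sg is positive semidefinite, Sg + mu^2 e_z e_z^T = S <= 1 - eta, and
   tr Sg <= 1 - mu^2 = sg^2 since the Bloch vectors lie in the unit ball.
   If sg > 1 - eta/4, then Delta Sg Delta <= (1 - eta) k^2 <= 1 - eta^2/4.
   Otherwise, positivity of Sg bounds the form of Delta Sg Delta by
   k r + k^2 Sg_zz, where r is the trace of the xy block; as
   Sg_zz <= sg^2 - max (eta, r), this is at most 1 - max (eta, r) k (k - 1)
   with k (k - 1) >= 1 - sg >= eta/4.  Hence eta' = eta^2/4 works. *)

From HB Require Import structures.
From mathcomp Require Import all_boot all_order all_algebra.
From mathcomp Require Import all_classical all_reals all_analysis.
From mathcomp Require Import ring lra.
Set Implicit Arguments. Unset Strict Implicit. Unset Printing Implicit Defensive.
Import Order.TTheory GRing.Theory Num.Theory.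
Local Open Scope ring_scope.

Section BoundedExpectation.
Context d (T : measurableType d) (R : realType) (P : probability T R).

Definition bounded_mfun (f : T -> R) :=
  measurable_fun setT f /\ exists M, forall t, `|f t| <= M.

Lemma bounded_mfun_Lfun1 f : bounded_mfun f -> f \in Lfun P 1.
Proof.
move=> [mf [M hM]]; apply/Lfun1_integrable/measurable_bounded_integrable => //.
  by rewrite (le_lt_trans (probability_le1 P measurableT)) ?ltry.
exists M; split; first by rewrite num_real.
by move=> M' ltMM' t _; exact: le_trans (hM t) (ltW ltMM').
Qed.

Lemma bounded_mfun_cst c : bounded_mfun (fun=> c).
Proof. by split; [exact: measurable_cst | exists `|c|]. Qed.

Lemma bounded_mfunD f g :
  bounded_mfun f -> bounded_mfun g -> bounded_mfun (fun t => f t + g t).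
Proof.
move=> [mf [M hM]] [mg [N hN]]; split; first exact: measurable_realfun.measurable_funD.
by exists (M + N) => t; rewrite (le_trans (ler_normD _ _)) ?lerD.
Qed.

Lemma bounded_mfunM f g :
  bounded_mfun f -> bounded_mfun g -> bounded_mfun (fun t => f t * g t).
Proof.
move=> [mf [M hM]] [mg [N hN]]; split; first exact: measurable_realfun.measurable_funM.
by exists (M * N) => t; rewrite normrM ler_pM.
Qed.

Lemma bounded_mfunZ k f : bounded_mfun f -> bounded_mfun (fun t => k * f t).
Proof. exact: bounded_mfunM (bounded_mfun_cst k). Qed.

Lemma bounded_mfun_sqr f : bounded_mfun f -> bounded_mfun (fun t => f t ^+ 2).
Proof.
by move=> bf; under [fun t => _]funext do rewrite expr2; exact: bounded_mfunM.
Qed.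

Lemma bounded_mfun_sum (I : Type) (r : seq I) (F : I -> T -> R) :
  (forall i, bounded_mfun (F i)) -> bounded_mfun (fun t => \sum_(i <- r) F i t).
Proof.
move=> bF; elim: r => [|i r IHr].
  by under [fun t => _]funext do rewrite big_nil; exact: bounded_mfun_cst.
by under [fun t => _]funext do rewrite big_cons; exact: bounded_mfunD.
Qed.

Lemma Ex_cst c : Ex P (fun=> c) = c.
Proof. by rewrite /Ex expectation_cst. Qed.

Lemma ExD f g : bounded_mfun f -> bounded_mfun g ->
  Ex P (fun t => f t + g t) = Ex P f + Ex P g.
Proof.
move=> /bounded_mfun_Lfun1 f1 /bounded_mfun_Lfun1 g1.
by rewrite /Ex [X in 'E_P[X]%E]/(f \+ g) expectationD // fineD ?expectation_fin_num.
Qed.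

Lemma ExZ k f : bounded_mfun f -> Ex P (fun t => k * f t) = k * Ex P f.
Proof.
move=> /bounded_mfun_Lfun1 f1; rewrite /Ex.
have -> : (fun t => k * f t) = k \o* f by apply: funext => t /=; rewrite mulrC.
by rewrite expectationZl // fineM ?expectation_fin_num.
Qed.

Lemma Ex_sum (I : Type) (r : seq I) (F : I -> T -> R) :
  (forall i, bounded_mfun (F i)) ->
  Ex P (fun t => \sum_(i <- r) F i t) = \sum_(i <- r) Ex P (F i).
Proof.
move=> bF; elim: r => [|i r IHr].
  by under [fun t => _]funext do rewrite big_nil; rewrite big_nil Ex_cst.
under [fun t => _]funext do rewrite big_cons.
by rewrite ExD ?big_cons ?IHr //; exact: bounded_mfun_sum.
Qed.

Lemma Ex_ge0 f : (forall t, 0 <= f t) -> 0 <= Ex P f.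
Proof. by move=> f0; rewrite /Ex fine_ge0 // expectation_ge0. Qed.

Lemma Ex_le f g : bounded_mfun f -> bounded_mfun g ->
  (forall t, f t <= g t) -> Ex P f <= Ex P g.
Proof.
move=> bf bg fg; rewrite -subr_ge0 -mulN1r -ExZ // -ExD ?Ex_ge0 //.
  by move=> t; rewrite mulN1r subr_ge0.
exact: bounded_mfunZ.
Qed.

Lemma sqr_Ex_le f : bounded_mfun f -> Ex P f ^+ 2 <= Ex P (fun t => f t ^+ 2).
Proof.
move=> bf; have bf2 := bounded_mfun_sqr bf.
have : 0 <= Ex P (fun t => (f t - Ex P f) ^+ 2) by apply: Ex_ge0 => t; exact: sqr_ge0.
have -> : (fun t => (f t - Ex P f) ^+ 2) =
          (fun t => f t ^+ 2 + ((- 2 * Ex P f) * f t + Ex P f ^+ 2)).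
  by apply: funext => t; ring.
have bZ := bounded_mfunZ (- 2 * Ex P f) bf.
have bZc := bounded_mfunD bZ (bounded_mfun_cst (Ex P f ^+ 2)).
by rewrite ExD // ExD ?Ex_cst // ?ExZ //; [lra | exact: bounded_mfun_cst].
Qed.

End BoundedExpectation.

Lemma quadratic_ge0_discr (R : realFieldType) (A B C : R) :
  (forall x y, 0 <= x ^+ 2 * A + 2 * x * y * B + y ^+ 2 * C) -> B ^+ 2 <= A * C.
Proof.
move=> q_ge0; have A_ge0 : 0 <= A by have := q_ge0 1 0; lra.
have C_ge0 : 0 <= C by have := q_ge0 0 1; lra.
have [A0|A_neq0] := eqVneq A 0.
  have [->|B_neq0] := eqVneq B 0; first by rewrite A0 expr0n mul0r.
  have := q_ge0 (- (C + 1) / B) 1; rewrite A0.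
  have -> : (- (C + 1) / B) ^+ 2 * 0 + 2 * (- (C + 1) / B) * 1 * B + 1 ^+ 2 * C
            = - C - 2 by field.
  lra.
have A_gt0 : 0 < A by rewrite lt_def A_neq0.
have := q_ge0 B (- A).
have -> : B ^+ 2 * A + 2 * B * - A * B + (- A) ^+ 2 * C = A * (A * C - B ^+ 2)
  by ring.
by rewrite pmulr_rge0 // subr_ge0.
Qed.

Section QuadraticForms.
Variables (R : realType) (n : nat).
Implicit Types (M S : 'M[R]_n) (x y v : 'cV[R]_n).

Definition bform M x y : R := (x^T *m M *m y) 0 0.
Definition qform M v : R := bform M v v.
Definition psdmx M := forall v, 0 <= qform M v.

Lemma bformE M x y : bform M x y = \sum_i \sum_j x i 0 * M i j * y j 0.
Proof.
rewrite /bform mxE exchange_big; apply: eq_bigr => j _.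
by rewrite mxE mulr_suml; apply: eq_bigr => i _; rewrite mxE.
Qed.

Lemma bformC M x y : M^T = M -> bform M x y = bform M y x.
Proof.
move=> symM; rewrite /bform.
have -> : y^T *m M *m x = (x^T *m M *m y)^T by rewrite !trmx_mul trmxK symM mulmxA.
by rewrite [RHS]mxE.
Qed.

Lemma bformDl M x y z : bform M (x + y) z = bform M x z + bform M y z.
Proof. by rewrite /bform linearD !mulmxDl mxE. Qed.

Lemma bformZl M a x y : bform M (a *: x) y = a * bform M x y.
Proof. by rewrite /bform linearZ -!scalemxAl mxE. Qed.

Lemma bformDr M x y z : bform M x (y + z) = bform M x y + bform M x z.
Proof. by rewrite /bform mulmxDr mxE. Qed.

Lemma bformZr M a x y : bform M x (a *: y) = a * bform M x y.
Proof. by rewrite /bform -scalemxAr mxE. Qed.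

Lemma qform_lin_comb M a b x y : M^T = M ->
  qform M (a *: x + b *: y) =
  a ^+ 2 * qform M x + 2 * a * b * bform M x y + b ^+ 2 * qform M y.
Proof.
move=> symM; rewrite /qform !(bformDl, bformDr, bformZl, bformZr) (bformC y x symM).
ring.
Qed.

Lemma bform_Cauchy_Schwarz M x y : M^T = M -> psdmx M ->
  bform M x y ^+ 2 <= qform M x * qform M y.
Proof.
by move=> symM psdM; apply: quadratic_ge0_discr => a b; rewrite -qform_lin_comb.
Qed.

Lemma qform_mulmx A M v : qform (A^T *m M *m A) v = qform M (A *m v).
Proof. by rewrite /qform /bform trmx_mul !mulmxA. Qed.

Lemma norm2_ge0 v : 0 <= norm2 v.
Proof. exact: sqrtr_ge0. Qed.

Lemma qform1 v : qform 1%:M v = norm2 v ^+ 2.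
Proof.
rewrite /qform /bform mulmx1 mxE sqr_sqrtr; last first.
  by rewrite sumr_ge0 // => i _; exact: sqr_ge0.
by apply: eq_bigr => i _; rewrite mxE expr2.
Qed.

Lemma psdmx1 : psdmx 1%:M.
Proof. by move=> v; rewrite qform1 sqr_ge0. Qed.

Lemma bform1_le x y : bform 1%:M x y <= norm2 x * norm2 y.
Proof.
have := bform_Cauchy_Schwarz x y (trmx1 _ _) psdmx1.
rewrite !qform1 -exprMn => CS.
have := mulr_ge0 (norm2_ge0 x) (norm2_ge0 y); nra.
Qed.

Lemma norm2Z a v : norm2 (a *: v) = `|a| * norm2 v.
Proof.
rewrite /norm2; under eq_bigr do rewrite mxE exprMn.
by rewrite -mulr_sumr sqrtrM ?sqr_ge0 // sqrtr_sqr.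
Qed.

Lemma mulmx_row_bform S v i : (S *m v) i 0 = bform 1%:M (row i S)^T v.
Proof. by rewrite /bform trmxK mulmx1 -row_mul [RHS]mxE. Qed.

Lemma norm2_mulmx_le S v :
  norm2 (S *m v) <= Num.sqrt (\sum_i norm2 (row i S)^T ^+ 2) * norm2 v.
Proof.
have sqr_sum_ge0 (F : 'I_n -> R) : 0 <= \sum_i F i ^+ 2.
  by rewrite sumr_ge0 // => i _; exact: sqr_ge0.
rewrite -[norm2 v]ger0_norm ?norm2_ge0 // -sqrtr_sqr -sqrtrM //.
rewrite /(norm2 (S *m v)) ler_sqrt ?mulr_ge0 ?sqr_ge0 ?norm2_ge0 //.
rewrite mulr_suml.
apply: ler_sum => i _; rewrite mulmx_row_bform -!qform1.
exact: bform_Cauchy_Schwarz (trmx1 _ _) psdmx1.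
Qed.

Lemma opnorm_ub S v : norm2 v <= 1 -> norm2 (S *m v) <= opnorm S.
Proof.
move=> v_le1; apply: ub_le_sup; last by exists v.
exists (Num.sqrt (\sum_i norm2 (row i S)^T ^+ 2)) => _ [w w_le1 <-].
exact: le_trans (norm2_mulmx_le S w) (ler_piMr (sqrtr_ge0 _) w_le1).
Qed.

Lemma norm2_mulmx_le_opnorm S v : norm2 (S *m v) <= opnorm S * norm2 v.
Proof.
have [v0|v_neq0] := eqVneq (norm2 v) 0.
  by have := norm2_mulmx_le S v; rewrite v0 !mulr0.
have v_gt0 : 0 < norm2 v by rewrite lt_def v_neq0 norm2_ge0.
have u_le1 : norm2 ((norm2 v)^-1 *: v) <= 1.
  by rewrite norm2Z ger0_norm ?invr_ge0 ?norm2_ge0 // mulVf.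
have := opnorm_ub S u_le1.
by rewrite -scalemxAr norm2Z ger0_norm ?invr_ge0 ?norm2_ge0 // ler_pdivrMl // mulrC.
Qed.

Lemma qform_le_opnorm S v : qform S v <= opnorm S * norm2 v ^+ 2.
Proof.
have -> : qform S v = bform 1%:M v (S *m v) by rewrite /qform /bform mulmx1 mulmxA.
apply: le_trans (bform1_le _ _) _.
by rewrite mulrC expr2 mulrA ler_wpM2r ?norm2_ge0 ?norm2_mulmx_le_opnorm.
Qed.

Lemma opnorm_le_psd M (c : R) : M^T = M -> psdmx M -> 0 <= c ->
  (forall v, qform M v <= c * norm2 v ^+ 2) -> opnorm M <= c.
Proof.
move=> symM psdM c_ge0 qM_le; apply: ge_sup.
  exists (norm2 (M *m 0)), 0 => //=.
  by rewrite /norm2 big1 ?sqrtr0 ?ler01 // => i _; rewrite mxE expr0n.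
move=> _ [v v_le1 <-]; set N := norm2 (M *m v).
have N2 : N ^+ 2 = bform M (M *m v) v by rewrite -qform1 /qform /bform mulmx1 mulmxA.
have N4_le : N ^+ 2 * N ^+ 2 <= (c * N ^+ 2) * c.
  have CS : N ^+ 2 * N ^+ 2 <= qform M (M *m v) * qform M v.
    by rewrite -expr2 N2; exact: bform_Cauchy_Schwarz.
  apply: le_trans CS _; rewrite ler_pM ?psdM ?qM_le //.
  by apply: le_trans (qM_le v) _; rewrite ler_piMr // expr_le1 ?norm2_ge0.
have N_ge0 : 0 <= N := norm2_ge0 _.
have [-> //|N_neq0] := eqVneq N 0.
have N2_gt0 : 0 < N ^+ 2 by rewrite exprn_gt0 // lt_def N_neq0.
have N2_le : N ^+ 2 <= c ^+ 2 by nra.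
by rewrite -(ler_pXn2r (isT : (0 < 2)%N)) ?nnegrE.
Qed.

Lemma qform_add_le M x y (p q A B : R) : M^T = M -> psdmx M ->
  0 <= p -> 0 <= q -> 0 <= A -> 0 <= B ->
  qform M x <= p * A -> qform M y <= q * B -> qform M (x + y) <= (p + q) * (A + B).
Proof.
move=> symM psdM p_ge0 q_ge0 A_ge0 B_ge0 qx_le qy_le.
have := qform_lin_comb 1 1 x y symM; rewrite !scale1r => ->.
have := bform_Cauchy_Schwarz x y symM psdM; have := psdM x; have := psdM y.
move: (qform M x) (qform M y) (bform M x y) qx_le qy_le.
move=> a b c a_le b_le b_ge0 a_ge0 CS.
have ab_le : a * b <= (p * A) * (q * B) by rewrite ler_pM.
have cross_le : 2 * c <= q * A + p * B.
  have : (2 * c) ^+ 2 <= (q * A + p * B) ^+ 2.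
    have -> : (q * A + p * B) ^+ 2 = 4 * ((p * A) * (q * B)) + (q * A - p * B) ^+ 2.
      by ring.
    have := sqr_ge0 (q * A - p * B); nra.
  have : 0 <= q * A + p * B by rewrite addr_ge0 ?mulr_ge0.
  nra.
have -> : (p + q) * (A + B) = p * A + q * B + (q * A + p * B) by ring.
by rewrite !expr1n !mul1r -!mulrA mul1r; lra.
Qed.

End QuadraticForms.

Section ThreeDim.
Variable R : realType.
Implicit Types (M : 'M[R]_3) (u v w : 'cV[R]_3).

Definition vec3 (x0 x1 x2 : R) : 'cV[R]_3 := \col_i [:: x0; x1; x2]`_i.

Lemma sum3 (F : 'I_3 -> R) : \sum_i F i = F 0 + F 1 + F 2.
Proof.
by rewrite !big_ord_recr big_ord0 /= add0r; congr (F _ + F _ + F _); apply: val_inj.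
Qed.

Lemma col3P u w : u 0 0 = w 0 0 -> u 1 0 = w 1 0 -> u 2 0 = w 2 0 -> u = w.
Proof.
move=> eq0 eq1 eq2; apply/matrixP => -[[|[|[|//]]] lti] j; rewrite ord1.
- by rewrite (_ : Ordinal lti = 0) //; exact: val_inj.
- by rewrite (_ : Ordinal lti = 1) //; exact: val_inj.
- by rewrite (_ : Ordinal lti = 2) //; exact: val_inj.
Qed.

Lemma vec3E v : v = vec3 (v 0 0) (v 1 0) (v 2 0).
Proof. by apply: col3P; rewrite mxE. Qed.

Lemma vec3D x0 x1 x2 y0 y1 y2 :
  vec3 x0 x1 x2 + vec3 y0 y1 y2 = vec3 (x0 + y0) (x1 + y1) (x2 + y2).
Proof. by apply: col3P; rewrite !mxE. Qed.

Lemma norm2_vec3 x0 x1 x2 : norm2 (vec3 x0 x1 x2) ^+ 2 = x0 ^+ 2 + x1 ^+ 2 + x2 ^+ 2.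
Proof. by rewrite -qform1 /qform bformE !sum3 !mxE /=; ring. Qed.

Lemma mx_sym_entry M i j : M^T = M -> M i j = M j i.
Proof. by move=> symM; rewrite -[in LHS]symM mxE. Qed.

Lemma qform_vec3 M x0 x1 x2 : M^T = M ->
  qform M (vec3 x0 x1 x2) =
  x0 ^+ 2 * M 0 0 + x1 ^+ 2 * M 1 1 + x2 ^+ 2 * M 2 2
  + 2 * x0 * x1 * M 0 1 + 2 * x0 * x2 * M 0 2 + 2 * x1 * x2 * M 1 2.
Proof.
move=> symM; rewrite /qform bformE !sum3 !mxE /=.
rewrite (mx_sym_entry 1 0 symM) (mx_sym_entry 2 0 symM) (mx_sym_entry 2 1 symM).
ring.
Qed.

End ThreeDim.

Lemma small_mean_bound (R : realFieldType) (eta sg k : R) :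
  0 < eta < 1 -> 1 - eta / 4 < sg -> k * sg = 1 ->
  (1 - eta) * k ^+ 2 <= 1 - eta ^+ 2 / 4.
Proof.
move=> /andP[eta_gt0 eta_lt1] sg_gt k_sg.
have k2sg2 : k ^+ 2 * sg ^+ 2 = 1 by rewrite -exprMn k_sg expr1n.
have sg2_ge : 1 - eta / 2 <= sg ^+ 2 by nra.
have : 1 - eta <= (1 - eta ^+ 2 / 4) * sg ^+ 2.
  apply: le_trans (_ : _ <= (1 - eta ^+ 2 / 4) * (1 - eta / 2)) _; last first.
    by rewrite ler_wpM2l //; nra.
  have : 0 <= eta / 4 * (2 - eta) by apply: mulr_ge0; lra.
  have : 0 <= eta ^+ 3 / 8 by rewrite divr_ge0 // exprn_ge0 // ltW.
  nra.
have := sqr_ge0 k; nra.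
Qed.

Lemma large_mean_bound (R : realFieldType) (eta sg k r z : R) :
  0 < eta -> 0 < sg <= 1 - eta / 4 -> k * sg = 1 ->
  z <= sg ^+ 2 - eta -> r + z <= sg ^+ 2 ->
  k * r + k ^+ 2 * z <= 1 - eta ^+ 2 / 4.
Proof.
move=> eta_gt0 /andP[sg_gt0 sg_le] k_sg z_le rz_le.
have k_ge1 : 1 <= k by nra.
have k2sg2 : k ^+ 2 * sg ^+ 2 = 1 by rewrite -exprMn k_sg expr1n.
have kk1 : eta / 4 <= k * (k - 1).
  have : k * (k - 1) * sg ^+ 2 = 1 - sg.
    have -> : k * (k - 1) * sg ^+ 2 = (k * sg) ^+ 2 - (k * sg) * sg by ring.
    by rewrite k_sg expr1n mul1r.
  nra.
have k2_ge0 : 0 <= k ^+ 2 := sqr_ge0 k.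
have [eta_le_r|r_lt_eta] := leP eta r.
- have : k ^+ 2 * z <= k ^+ 2 * (sg ^+ 2 - r) by rewrite ler_wpM2l //; lra.
  have : eta * (eta / 4) <= r * (k * (k - 1)) by rewrite ler_pM //; lra.
  nra.
- have : k ^+ 2 * z <= k ^+ 2 * (sg ^+ 2 - eta) by rewrite ler_wpM2l.
  have : k * r <= k * eta by apply: ler_wpM2l; [exact: le_trans ler01 k_ge1 | exact: ltW].
  have : eta * (eta / 4) <= eta * (k * (k - 1)) by rewrite ler_wpM2l // ltW.
  nra.
Qed.

Lemma qform_vec3_top_le (R : realType) (M : 'M[R]_3) x0 x1 : M^T = M -> psdmx M ->
  qform M (vec3 x0 x1 0) <= (x0 ^+ 2 + x1 ^+ 2) * (M 0 0 + M 1 1).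
Proof.
move=> symM psdM; have := psdM (vec3 (- x1) x0 0).
have -> : (x0 ^+ 2 + x1 ^+ 2) * (M 0 0 + M 1 1) =
          qform M (vec3 x0 x1 0) + qform M (vec3 (- x1) x0 0).
  by rewrite !qform_vec3 //; ring.
by rewrite lerDl.
Qed.

Lemma qform_vec3_block_le (R : realType) (M : 'M[R]_3) a b x0 x1 x2 :
  M^T = M -> psdmx M ->
  qform M (vec3 (a * x0) (a * x1) (b * x2)) <=
  (x0 ^+ 2 + x1 ^+ 2 + x2 ^+ 2) * (a ^+ 2 * (M 0 0 + M 1 1) + b ^+ 2 * M 2 2).
Proof.
move=> symM psdM.
have M00_ge0 : 0 <= M 0 0 by have := psdM (vec3 1 0 0); rewrite qform_vec3 //; lra.
have M11_ge0 : 0 <= M 1 1 by have := psdM (vec3 0 1 0); rewrite qform_vec3 //; lra.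
have M22_ge0 : 0 <= M 2 2 by have := psdM (vec3 0 0 1); rewrite qform_vec3 //; lra.
have -> : vec3 (a * x0) (a * x1) (b * x2) = vec3 (a * x0) (a * x1) 0 + vec3 0 0 (b * x2).
  by rewrite vec3D !addr0 add0r.
apply: qform_add_le => //.
- by rewrite addr_ge0 ?sqr_ge0.
- exact: sqr_ge0.
- by rewrite mulr_ge0 ?sqr_ge0 ?addr_ge0.
- by rewrite mulr_ge0 ?sqr_ge0.
- apply: le_trans (qform_vec3_top_le _ _ symM psdM) _.
  by rewrite !exprMn -mulrDr mulrCA mulrA.
- by rewrite qform_vec3 // !exprMn; lra.
Qed.

Lemma Delta_mx_mulE (R : realType) (mu : R) : mu ^+ 2 < 1 ->
  exists sg k al : R, [/\ 0 < sg, sg ^+ 2 = 1 - mu ^+ 2, k * sg = 1, al ^+ 2 = k &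
    forall v, Delta_mx mu *m v = vec3 (al * v 0 0) (al * v 1 0) (k * v 2 0)].
Proof.
move=> mu2_lt1; have mu2_le1 : 0 <= 1 - mu ^+ 2 by rewrite subr_ge0 ltW.
have sg_gt0 : 0 < Num.sqrt (1 - mu ^+ 2) by rewrite sqrtr_gt0 subr_gt0.
exists (Num.sqrt (1 - mu ^+ 2)), (Num.sqrt (1 - mu ^+ 2))^-1.
exists (Num.sqrt (Num.sqrt (1 - mu ^+ 2)))^-1; split => //.
- by rewrite sqr_sqrtr.
- by rewrite mulVf // gt_eqF.
- by rewrite exprVn sqr_sqrtr // ltW.
- by move=> v; apply: col3P; rewrite mul_diag_mx !mxE.
Qed.

Lemma qform_Delta_le (R : realType) (Sg : 'M[R]_3) (eta mu : R) :
  0 < eta < 1 -> Sg^T = Sg -> psdmx Sg ->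
  (forall w, qform Sg w + mu ^+ 2 * w 2 0 ^+ 2 <= (1 - eta) * norm2 w ^+ 2) ->
  \tr Sg + mu ^+ 2 <= 1 ->
  forall v, qform Sg (Delta_mx mu *m v) <= (1 - eta ^+ 2 / 4) * norm2 v ^+ 2.
Proof.
move=> eta01 symSg psdSg Sg_le trSg v; have /andP[eta_gt0 eta_lt1] := eta01.
have := Sg_le (vec3 0 0 1); have := psdSg (vec3 0 0 1).
rewrite qform_vec3 // norm2_vec3 mxE /= => Sg22_ge0 Sg22_le.
have mu2_lt1 : mu ^+ 2 < 1 by lra.
have [sg [k [al [sg_gt0 sg2 k_sg al2 ->]]]] := Delta_mx_mulE mu2_lt1.
have k_ge1 : 1 <= k by nra.
rewrite [v]vec3E norm2_vec3 !mxE /=; move: (v 0 0) (v 1 0) (v 2 0) => x0 x1 x2.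
have [sg_big|sg_small] := ltP (1 - eta / 4) sg.
  have := Sg_le (vec3 (al * x0) (al * x1) (k * x2)).
  rewrite norm2_vec3 mxE /= !exprMn al2 => Sg_le_x.
  apply: le_trans (_ : _ <= (1 - eta) * (k ^+ 2 * (x0 ^+ 2 + x1 ^+ 2 + x2 ^+ 2))) _.
    have : k * (x0 ^+ 2 + x1 ^+ 2) <= k ^+ 2 * (x0 ^+ 2 + x1 ^+ 2).
      by rewrite ler_wpM2r ?addr_ge0 ?sqr_ge0 // expr2 ler_peMl // (le_trans ler01 k_ge1).
    have := mulr_ge0 (sqr_ge0 mu) (sqr_ge0 (k * x2)); nra.
  rewrite mulrA; apply: ler_wpM2r; first by rewrite !addr_ge0 ?sqr_ge0.
  exact: small_mean_bound eta01 sg_big k_sg.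
apply: le_trans (qform_vec3_block_le _ _ _ _ _ symSg psdSg) _.
rewrite al2 mulrC ler_wpM2r ?addr_ge0 ?sqr_ge0 //.
have := trSg; rewrite /mxtrace sum3 => trSg3.
apply: (large_mean_bound (sg := sg)) => //; [by rewrite sg_gt0 | lra | lra].
Qed.

Section PauliMoments.
Context d (T : measurableType d) (R : realType) (P : probability T R).
Variable a : 'I_3 -> T -> R.
Hypothesis bounded_a : forall i, bounded_mfun (a i).

Let lin_comb (w : 'cV[R]_3) t := \sum_i w i 0 * a i t.

Lemma bounded_lin_comb w : bounded_mfun (lin_comb w).
Proof. by apply: bounded_mfun_sum => i; apply: bounded_mfunZ. Qed.

Lemma Ex_lin_comb w : Ex P (lin_comb w) = \sum_i w i 0 * Ex P (a i).
Proof.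
rewrite Ex_sum => [|i]; last exact: bounded_mfunZ.
by apply: eq_bigr => i _; rewrite ExZ.
Qed.

Lemma qform_second_moment w :
  qform (second_moment P a) w = Ex P (fun t => lin_comb w t ^+ 2).
Proof.
have bprod i j : bounded_mfun (fun t => w i 0 * a i t * (w j 0 * a j t)).
  by apply: bounded_mfunM; apply: bounded_mfunZ.
under [fun t => _]funext do rewrite /lin_comb expr2 mulr_suml.
under [fun t => _]funext do under eq_bigr do rewrite mulr_sumr.
rewrite /qform bformE Ex_sum => [|i]; last exact: bounded_mfun_sum.
apply: eq_bigr => i _; rewrite Ex_sum //; apply: eq_bigr => j _.
have bij : bounded_mfun (fun t => a i t * a j t) by exact: bounded_mfunM.
rewrite mxE mulrC -!ExZ //; last exact: bounded_mfunZ.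
by congr Ex; apply: funext => t; ring.
Qed.

Lemma qform_covariance_mx w : qform (covariance_mx P a) w =
  qform (second_moment P a) w - (\sum_i w i 0 * Ex P (a i)) ^+ 2.
Proof.
rewrite /qform !bformE expr2 big_distrl -sumrB; apply: eq_bigr => i _.
rewrite big_distrr -sumrB /=; apply: eq_bigr => j _.
by rewrite !mxE; ring.
Qed.

Lemma covariance_mx_psd : psdmx (covariance_mx P a).
Proof.
move=> w; rewrite qform_covariance_mx qform_second_moment -Ex_lin_comb subr_ge0.
exact/sqr_Ex_le/bounded_lin_comb.
Qed.

Lemma second_moment_sym : (second_moment P a)^T = second_moment P a.
Proof.
by apply/matrixP => i j; rewrite !mxE; congr Ex; apply: funext => t; rewrite mulrC.
Qed.

Lemma covariance_mx_sym : (covariance_mx P a)^T = covariance_mx P a.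
Proof.
rewrite /covariance_mx linearB /= second_moment_sym; congr (_ - _).
by apply/matrixP => i j; rewrite !mxE mulrC.
Qed.

Lemma mxtrace_covariance_mx : \tr (covariance_mx P a) =
  Ex P (fun t => \sum_i a i t ^+ 2) - \sum_i Ex P (a i) ^+ 2.
Proof.
rewrite /mxtrace Ex_sum => [|i]; last exact: bounded_mfun_sqr.
by rewrite -sumrB; apply: eq_bigr => i _; rewrite !mxE !expr2.
Qed.

End PauliMoments.

Lemma normr_le1_of_sum_sqr (R : realFieldType) n (x : 'I_n -> R) i :
  \sum_j x j ^+ 2 <= 1 -> `|x i| <= 1.
Proof.
move=> sum_le1; rewrite -(expr_le1 (_ : 0 < 2)%N) // real_normK ?num_real //.
apply: le_trans sum_le1; rewrite (bigD1 i) //= lerDl.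
by rewrite sumr_ge0 // => j _; exact: sqr_ge0.
Qed.

Theorem mainTheorem7 (R : realType) (eta : R) (heta : 0 < eta < 1) :
  exists eta' : R, 0 < eta' < 1 /\
  forall (d : measure_display) (T : measurableType d) (P : probability T R)
         (a : 'I_3 -> T -> R) (mu : R),
    (forall i, measurable_fun setT (a i)) ->
    (forall t, \sum_(i < 3) (a i t) ^+ 2 <= 1) ->
    Ex P (a 0) = 0 -> Ex P (a 1) = 0 -> Ex P (a 2) = mu ->
    opnorm (second_moment P a) <= 1 - eta ->
    opnorm (Delta_mx mu *m covariance_mx P a *m Delta_mx mu) <= 1 - eta'.
Proof.
have /andP[eta_gt0 eta_lt1] := heta.
exists (eta ^+ 2 / 4); split; first by apply/andP; split; nra.
move=> d T P a mu a_mf a_ball Ea0 Ea1 Ea2 S_le.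
have a_bd i : bounded_mfun (a i).
  by split=> //; exists 1 => t; apply: (normr_le1_of_sum_sqr (x := a^~ t)).
have symSg := covariance_mx_sym P a; have psdSg := covariance_mx_psd P a_bd.
have Sg_le w :
    qform (covariance_mx P a) w + mu ^+ 2 * w 2 0 ^+ 2 <= (1 - eta) * norm2 w ^+ 2.
  rewrite qform_covariance_mx sum3 Ea0 Ea1 Ea2 !mulr0 !add0r exprMn mulrC subrK.
  by apply: le_trans (qform_le_opnorm _ _) _; rewrite ler_wpM2r ?sqr_ge0.
have trSg : \tr (covariance_mx P a) + mu ^+ 2 <= 1.
  rewrite mxtrace_covariance_mx // sum3 Ea0 Ea1 Ea2 expr0n !add0r subrK -(Ex_cst P 1).
  apply: Ex_le a_ball; last exact: bounded_mfun_cst.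
  by apply: bounded_mfun_sum => i; exact: bounded_mfun_sqr.
have symD : (Delta_mx mu)^T = Delta_mx mu by exact: tr_diag_mx.
apply: opnorm_le_psd.
- by rewrite !trmx_mul symD symSg mulmxA.
- by move=> v; rewrite -[X in X *m _ *m _]symD qform_mulmx.
- nra.
- move=> v; rewrite -[X in X *m _ *m _]symD qform_mulmx.
  exact: qform_Delta_le.
Qed.
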